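(* Let $S$ be a finite semigroup. (i) If $S$ is monogenic, then $\sigma_s(S)=\infty$. (ii) If $S$ is a group, then $\sigma_s(S)=\sigma_g(S)$. (iii) If $S$ is neither monogenic nor a group, then $\sigma_s(S)=2$.
   Context: A semigroup is a nonempty set with an associative binary operation; a subsemigroup is a nonempty subset closed under the operation. A semigroup is monogenic if it is generated (as a semigroup) by a single element. For a semigroup $S$, $\sigma_s(S)$ denotes the least positive integer $n$ such that $S$ is the union of $n$ proper subsemigroups, and $\sigma_s(S)=\infty$ if no such finite $n$ exists. For a group $G$, $\sigma_g(G)$ is defined analogously using proper subgroups. *)

From HB Require Import structures.
From mathcomp Require Import all_boot.
From Stdlib Require Import ClassicalEpsilon.
Set Implicit Arguments. Unset Strict Implicit. Unset Printing Implicit Defensive.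

Section Semigroup.
Variables (T : finType) (op : T -> T -> T).

Definition is_subsemigroup (A : {set T}) : Prop :=
  A != set0 /\ (forall x y, x \in A -> y \in A -> op x y \in A).

(* x^(n+1) = x op x op ... op x (n+1 factors) *)
Definition spow (x : T) (n : nat) : T := iter n (op x) x.

Definition monogenic : Prop :=
  exists a : T, forall x : T, exists n : nat, x = spow a n.

Definition is_identity (e : T) : Prop := forall z, op e z = z /\ op z e = z.

Definition is_group : Prop :=
  exists e, is_identity e /\ forall x, exists y, op x y = e /\ op y x = e.

Definition is_subgroup (A : {set T}) : Prop :=
  A != set0 /\ (forall x y, x \in A -> y \in A -> op x y \in A) /\
  (forall x, x \in A -> exists2 y, y \in A & is_identity (op x y) /\ is_identity (op y x)).

Definition covered_by (Q : {set T} -> Prop) (n : nat) : Prop :=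
  exists F : n.-tuple {set T},
    (forall i : 'I_n, Q (tnth F i) /\ tnth F i != setT) /\
    \bigcup_(i < n) tnth F i = setT.

Definition pbool (P : Prop) : bool :=
  if excluded_middle_informative P then true else false.

(* least positive n such that S is covered by n proper Q-sets; None = infinity *)
Definition cover_number (Q : {set T} -> Prop) : option nat :=
  match excluded_middle_informative
          (exists n, (0 < n) && pbool (covered_by Q n)) with
  | left H => Some (ex_minn H)
  | right _ => None
  end.

Definition sigma_s : option nat := cover_number is_subsemigroup.
Definition sigma_g : option nat := cover_number is_subgroup.

End Semigroup.

(** If [S] is generated by [a], every subsemigroup containing [a] is all of
    [S], so no cover exists.  In a finite group some power of [x] equals the
    identity, so subsemigroups contain inverses and are subgroups.  Otherwise
    two proper subsemigroups suffice: if some [x] is not a product, take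
    [S \ {x}] and the powers of [x]; if every principal right (or left) ideal
    is proper, take a maximal proper right ideal [R] and the principal right
    ideal of an element outside [R]; in the remaining case [S = S^2] forces a
    two-sided identity, and a finite monoid that is not a group is covered by
    its units and its non-units. *)
From Stdlib Require Import ClassicalEpsilon FunctionalExtensionality PropExtensionality.
From mathcomp Require Import all_boot.
Set Implicit Arguments. Unset Strict Implicit. Unset Printing Implicit Defensive.

Lemma pboolP (P : Prop) : reflect P (pbool P).
Proof. by rewrite /pbool; case: excluded_middle_informative => ?; constructor. Qed.

Lemma fin_surj_inj (T : finType) (f : T -> T) :
  (forall y, exists x, f x = y) -> injective f.
Proof.
move=> fsurj; apply: in2T; apply/image_injP; apply/eqP/eq_card => y.
by case: (fsurj y) => x <-; rewrite codom_f.
Qed.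

Section CoverNumber.
Variables (T : finType) (Q : {set T} -> Prop).

Lemma not_covered_by1 : ~ covered_by Q 1.
Proof.
case=> F [FQ FU]; have [_ /eqP] := FQ ord0; apply.
by rewrite -FU big_ord_recl big_ord0 setU0.
Qed.

Lemma covered_by2 (A B : {set T}) :
  Q A -> A != setT -> Q B -> B != setT -> A :|: B = setT -> covered_by Q 2.
Proof.
move=> QA AT QB BT ABT; exists [tuple A; B]; split.
  by case=> [[|[|]]] //= _; rewrite /tnth.
by rewrite !big_ord_recl big_ord0 setU0.
Qed.

Lemma cover_number_None : (forall n, ~ covered_by Q n) -> cover_number Q = None.
Proof.
move=> noQ; rewrite /cover_number.
case: excluded_middle_informative => // ex; exfalso.
by case: ex => n /andP[_ /pboolP /noQ].
Qed.

Lemma cover_number2 : covered_by Q 2 -> cover_number Q = Some 2.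
Proof.
move=> Q2; rewrite /cover_number; case: excluded_middle_informative => [ex|[]];
  last by exists 2; apply/pboolP.
congr Some; case: ex_minnP => m /andP[m_gt0 /pboolP Qm] minm.
have: m <= 2 by apply: minm; apply/pboolP.
by case: m m_gt0 Qm {minm} => [|[|[|m]]] // _ /not_covered_by1.
Qed.

End CoverNumber.

Lemma eq_cover_number (T : finType) (Q Q' : {set T} -> Prop) :
  (forall A, Q A <-> Q' A) -> cover_number Q = cover_number Q'.
Proof.
move=> QQ'; congr cover_number; apply: functional_extensionality => A.
exact/propositional_extensionality/QQ'.
Qed.

Lemma sub_covered_by (T : finType) (Q Q' : {set T} -> Prop) n :
  (forall A, Q A -> Q' A) -> covered_by Q n -> covered_by Q' n.
Proof.
move=> QQ' [F [FQ FU]]; exists F; split=> // i.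
by have [/QQ'] := FQ i.
Qed.

Section FiniteSemigroup.
Variables (T : finType) (op : T -> T -> T).
Hypothesis opA : associative op.

Lemma spow_add x m n : spow op x (m + n).+1 = op (spow op x m) (spow op x n).
Proof. by elim: m => //= m IHm; rewrite -opA -IHm. Qed.

Lemma spow_closed (A : {set T}) x n :
  (forall y z, y \in A -> z \in A -> op y z \in A) -> x \in A -> spow op x n \in A.
Proof. by move=> clA xA; elim: n => //= n IHn; apply: clA. Qed.

Lemma spow_absorb x : exists d i, op (spow op x d) (spow op x i) = spow op x i.
Proof.
have /injectivePn[i [j neq_ij eq_ij]] : ~~ injectiveb (fun k : 'I_#|T|.+1 => spow op x k).
  by apply/injectiveP => /leq_card; rewrite card_ord ltnn.
wlog lt_ij : i j neq_ij eq_ij / i < j.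
  move=> IH; case: (ltngtP i j) => [lt_ij|lt_ji|eq_ij']; first exact: (IH i j).
    by apply: (IH j i); rewrite 1?eq_sym.
  by move: neq_ij; rewrite (val_inj eq_ij') eqxx.
exists (j - i).-1, i; rewrite -spow_add eq_ij; congr spow.
by rewrite -addSn prednK ?subn_gt0 // subnK // ltnW.
Qed.

Lemma monogenic_not_covered n : monogenic op -> ~ covered_by (is_subsemigroup op) n.
Proof.
case=> a gen_a [F [FQ FU]].
have: a \in \bigcup_(i < n) tnth F i by rewrite FU inE.
case/bigcupP=> i _ a_Fi; have [[_ clF] /eqP] := FQ i; apply.
by apply/setP => y; rewrite inE; have [k ->] := gen_a y; exact: spow_closed clF a_Fi.
Qed.

Definition powers x : {set T} := [set y | pbool (exists n, y = spow op x n)].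

Lemma powers_subsemigroup x : is_subsemigroup op (powers x).
Proof.
split; first by apply/set0Pn; exists x; rewrite inE; apply/pboolP; exists 0.
move=> y z; rewrite !inE => /pboolP[m ->] /pboolP[n ->]; apply/pboolP.
by exists (m + n).+1; rewrite spow_add.
Qed.

Lemma powers_setT x : powers x = setT -> monogenic op.
Proof.
move=> powT; exists x => y.
have : y \in powers x by rewrite powT inE.
by rewrite inE => /pboolP.
Qed.

Lemma group_subsemigroup_subgroup A :
  is_group op -> is_subsemigroup op A -> is_subgroup op A.
Proof.
case=> e [id_e inv] [A_ne clA]; do 2!split=> //.
have cancel_e a b : op a b = b -> a = e.
  move=> ab_b; have [c [bc _]] := inv b.
  by rewrite -(proj2 (id_e a)) -bc opA ab_b.
move=> x xA; have [d [i /cancel_e xd_e]] := spow_absorb x.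
(* [spow op x d = x^(d+1)] is the identity, so [x^(2d+1)] inverts [x]. *)
have xx_e : spow op x (d + d).+1 = e by rewrite spow_add xd_e (proj1 (id_e e)).
exists (spow op x (d + d)); first exact: spow_closed.
rewrite -[op x _]/(spow op x (d + d).+1) -[x in op _ x]/(spow op x 0).
by rewrite -spow_add addn0 xx_e.
Qed.

Lemma nonproduct_covered2 x :
  ~ monogenic op -> (forall y z, op y z != x) -> covered_by (is_subsemigroup op) 2.
Proof.
move=> not_mono x_nonprod.
have powx_ne : powers x != setT.
  by apply/eqP => powT; apply: not_mono; apply: powers_setT powT.
apply: (covered_by2 (B := [set y | y != x]) (powers_subsemigroup x) powx_ne).
- split=> [|y z _ _]; last by rewrite inE.
  have [y yx|only_x] := pickP (fun y => y != x); first by apply/set0Pn; exists y; rewrite inE.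
  by case: not_mono; exists x => y; exists 0; apply/eqP/negbFE/only_x.
- by apply/eqP => /setP/(_ x); rewrite !inE eqxx.
- apply/setP => y; rewrite !inE; have [->|] := eqVneq y x; last by rewrite orbT.
  by rewrite orbF; apply/pboolP; exists 0.
Qed.

Definition right_ideal (R : {set T}) : bool := [forall x in R, forall s, op x s \in R].

Definition rideal1 x : {set T} := x |: [set op x t | t : T].

Lemma rideal1_right_ideal x : right_ideal (rideal1 x).
Proof.
apply/forall_inP => y; rewrite !inE => /predU1P[->|/imsetP[t _ ->]];
  apply/forallP => s; rewrite !inE; apply/orP; right.
  exact: imset_f.
by rewrite -opA imset_f.
Qed.

Lemma right_ideal_subsemigroup R : R != set0 -> right_ideal R -> is_subsemigroup op R.
Proof. by move=> R_ne idR; split=> // y z yR _; apply: (forallP (forall_inP idR y yR)). Qed.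

Lemma right_idealU R R' : right_ideal R -> right_ideal R' -> right_ideal (R :|: R').
Proof.
move=> idR idR'; apply/forall_inP => y; rewrite inE => /orP[yR|yR'];
  apply/forallP => s; rewrite inE.
  by rewrite (forallP (forall_inP idR y yR)).
by rewrite (forallP (forall_inP idR' y yR')) orbT.
Qed.

(* A maximal proper nonempty right ideal [R], joined with the principal right
   ideal of any [x] outside it, is a strictly larger right ideal. *)
Lemma proper_rideal1_covered2 :
  0 < #|T| -> (forall x, rideal1 x != setT) -> covered_by (is_subsemigroup op) 2.
Proof.
case/card_gt0P=> x0 _ rideal1_proper.
pose P R := [&& R != set0, R != setT & right_ideal R].
have rideal1_ne x : rideal1 x != set0 by apply/set0Pn; exists x; rewrite setU11.
have [R /maxsetP[/and3P[R_ne RT idR] maxR]] : {R | maxset P R}.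
  by apply: ex_maxset; exists (rideal1 x0); rewrite /P rideal1_ne rideal1_proper rideal1_right_ideal.
have [x xR] : exists x, x \notin R.
  by apply/existsP; apply: contraR RT => /existsPn Rfull; apply/eqP/setP => y; rewrite inE; apply/negPn.
apply: (covered_by2 (right_ideal_subsemigroup R_ne idR) RT
  (right_ideal_subsemigroup (rideal1_ne x) (rideal1_right_ideal x)) (rideal1_proper x)).
apply/eqP; apply: contraT => RxT.
have sRRx : R \subset R :|: rideal1 x by apply: subsetUl.
have /maxR/(_ sRRx)/setP/(_ x) : P (R :|: rideal1 x).
  apply/and3P; split=> //; last exact: right_idealU idR (rideal1_right_ideal x).
  by apply/set0Pn; exists x; rewrite inE setU11 orbT.
by rewrite !inE eqxx orbT (negbTE xR).
Qed.

(* [a] is a product [y z] with [y = a] or [y = a w], so [a = a t0]; since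
   [op a] is onto, it is injective and [t0] is a left identity. *)
Lemma rideal1_setT_left_identity a :
  (forall x, exists y z, op y z = x) -> rideal1 a = setT -> exists e, forall s, op e s = s.
Proof.
move=> products aST.
have in_aS s : s = a \/ exists t, s = op a t.
  by have := in_setT s; rewrite -aST !inE => /predU1P[->|/imsetP[t _ ->]]; [left|right; exists t].
have [t0 at0] : exists t0, op a t0 = a.
  have [y [z yz_a]] := products a.
  case: (in_aS y) => [ya|[w yw]]; first by exists z; rewrite -{2}yz_a ya.
  by exists (op w z); rewrite opA -yw.
have inj_a : injective (op a).
  by apply: fin_surj_inj => s; case: (in_aS s) => [->|[t ->]]; [exists t0|exists t].
by exists t0 => s; apply: inj_a; rewrite opA at0.
Qed.

Definition units e : {set T} := [set s | [exists y, (op s y == e) && (op y s == e)]].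

Section FiniteMonoid.
Variable e : T.
Hypothesis id_e : is_identity op e.

Lemma right_inverse_left s r : op s r = e -> op r s = e.
Proof.
move=> sr_e.
have inj_s : injective (op s).
  by apply: fin_surj_inj => u; exists (op r u); rewrite opA sr_e (proj1 (id_e u)).
by apply: inj_s; rewrite opA sr_e (proj1 (id_e s)) (proj2 (id_e s)).
Qed.

Lemma unitsP s : reflect (exists r, op s r = e) (s \in units e).
Proof.
rewrite inE; apply: (iffP existsP) => [[r /andP[/eqP sr _]]|[r sr]]; first by exists r.
by exists r; rewrite sr (right_inverse_left sr) eqxx.
Qed.

Lemma unit_identity : e \in units e.
Proof. by apply/unitsP; exists e; apply: (proj1 (id_e e)). Qed.

Lemma units_subsemigroup : is_subsemigroup op (units e).
Proof.
split; first by apply/set0Pn; exists e; apply: unit_identity.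
move=> s t /unitsP[r sr] /unitsP[q tq]; apply/unitsP; exists (op q r).
by rewrite -opA (opA t) tq (proj1 (id_e r)).
Qed.

(* In a finite monoid a product is a unit only if its left factor is. *)
Lemma nonunits_subsemigroup : units e != setT -> is_subsemigroup op (~: units e).
Proof.
move=> unitsT; split.
  by apply: contraNneq unitsT => unitsC0; rewrite -[units e]setCK unitsC0 setC0.
move=> s t; rewrite !in_setC => s_nonunit _; apply: contra s_nonunit.
by case/unitsP=> r str; apply/unitsP; exists (op t r); rewrite opA.
Qed.

Lemma monoid_nongroup_covered2 : ~ is_group op -> covered_by (is_subsemigroup op) 2.
Proof.
move=> not_group.
have unitsT : units e != setT.
  apply/eqP => unitsT; apply: not_group; exists e; split=> // x.
  have /unitsP[y xy] : x \in units e by rewrite unitsT inE.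
  by exists y; split=> //; apply: right_inverse_left.
apply: (covered_by2 units_subsemigroup unitsT (nonunits_subsemigroup unitsT)).
- by apply/eqP => /setP/(_ e); rewrite in_setC in_setT unit_identity.
- exact: setUCr.
Qed.

End FiniteMonoid.

End FiniteSemigroup.

Lemma subsemigroup_opp (T : finType) (op : T -> T -> T) (A : {set T}) :
  is_subsemigroup (fun x y => op y x) A -> is_subsemigroup op A.
Proof. by case=> A_ne clA; split=> // x y xA yA; apply: clA. Qed.

Lemma square_nongroup_covered2 (T : finType) (op : T -> T -> T) :
  associative op -> 0 < #|T| -> (forall x, exists y z, op y z = x) -> ~ is_group op ->
  covered_by (is_subsemigroup op) 2.
Proof.
move=> opA T_nonempty products not_group.
pose opp x y := op y x; have oppA : associative opp by move=> x y z; rewrite /opp opA.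
have [rideal1_proper | /forallPn[a /negPn/eqP aST]] := boolP [forall a, rideal1 op a != setT].
  exact: proper_rideal1_covered2 opA T_nonempty (forallP rideal1_proper).
(* Principal left ideals of [op] are the principal right ideals of [opp]. *)
have [lideal1_proper | /forallPn[b /negPn/eqP bST]] := boolP [forall b, rideal1 opp b != setT].
  apply: sub_covered_by (@subsemigroup_opp T op) _.
  exact: proper_rideal1_covered2 oppA T_nonempty (forallP lideal1_proper).
have products_opp x : exists y z, opp y z = x by have [y [z yz]] := products x; exists z, y.
have [e le] := rideal1_setT_left_identity opA products aST.
have [f rf] := rideal1_setT_left_identity oppA products_opp bST.
have ef : e = f by rewrite -[RHS]le; symmetry; exact: (rf e).
have id_e : is_identity op e by move=> s; split; [exact: le|rewrite ef; exact: (rf s)].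
exact: (monoid_nongroup_covered2 opA id_e not_group).
Qed.

Theorem mainTheorem1 (T : finType) (op : T -> T -> T)
  (opA : associative op) (T_nonempty : 0 < #|T|) :
  (monogenic op -> sigma_s op = None) /\
  (is_group op -> sigma_s op = sigma_g op) /\
  (~ monogenic op -> ~ is_group op -> sigma_s op = Some 2).
Proof.
split; first by move=> mono; apply/cover_number_None => n; apply: monogenic_not_covered.
split.
  move=> grp; apply: eq_cover_number => A; split; last by case=> ? [].
  exact: group_subsemigroup_subgroup.
move=> not_mono not_group; apply: cover_number2.
have [x x_nonprod | products] := pickP (fun x => [forall y, forall z, op y z != x]).
  by apply: (nonproduct_covered2 opA not_mono) => y z; apply: (forallP (forallP x_nonprod y)).
apply: square_nongroup_covered2 => // x.
by have /negbT/forallPn[y /forallPn[z /negPn/eqP]] := products x; exists y, z.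
Qed.
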